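(* Let $\mathbb F$ be algebraically closed and $A(s),B(s)\in\mathbb F[s]^{p\times q}$ pencils, with ranks $\rho_1,\rho_2$, $\rho=\min\{\rho_1,\rho_2\}$, homogeneous invariant factors $\phi_1\mid\cdots\mid\phi_{\rho_1}$ of $A(s)$ and $\psi_1\mid\cdots\mid\psi_{\rho_2}$ of $B(s)$, column minimal indices $c_1\ge\dots\ge c_{q-\rho_1}$ of $A$ and $d_1\ge\dots\ge d_{q-\rho_2}$ of $B$, row minimal indices $u_1\ge\dots\ge u_{p-\rho_1}$ of $A$ and $v_1\ge\dots\ge v_{p-\rho_2}$ of $B$. Let $(r_1,\dots),(s_1,\dots),(r'_1,\dots),(s'_1,\dots)$ be the conjugate partitions of $(c_i),(d_i),(u_i),(v_i)$, $r_0=q-\rho_1$, $s_0=q-\rho_2$, $r'_0=p-\rho_1$, $s'_0=p-\rho_2$, $\mathbf r=(r_0,r_1,\dots)$, $\mathbf s=(s_0,s_1,\dots)$, $\mathbf r'=(r'_0,r'_1,\dots)$, $\mathbf s'=(s'_0,s'_1,\dots)$. Assume $\mathbf r\ne\mathbf s$, $\mathbf r'=\mathbf s'$, and $$G\le\sum_{i=1}^\rho\min\{r_i,s_i\}+\max\{e,e'\},$$ where $x=\min\{i: r_i\ne s_i\}$, $e=\min\{i\ge x-1: s_{i+1}\ge r_{i+1}\}$, $e'=\min\{i\ge x-1: r_{i+1}\ge s_{i+1}\}$, $G=\rho-1-\sum_{i=1}^{\rho-1}\deg\gcd(\phi_{i+1},\psi_{i+1})-\sum_{i=1}^{\rho}r'_i$.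 Consider the conditions (D$\phi$): $\phi_j\mid\psi_j$ for $1\le j\le\rho$; (D$\psi$): $\psi_j\mid\phi_j$ for $1\le j\le\rho$. Then: 1. If $e>e'$: (a) for $i\in\{x,\dots,e\}$, $-x-1\le s_i-r_i\le-1$, and if $s_i-r_i=-x-1$ then (D$\phi$) holds; (b) for $i>e$, $-x\le s_i-r_i\le e+1$, and if $s_i-r_i=e+1$ then (D$\psi$) holds. 2. If $e'>e$: (a) for $i\in\{x,\dots,e'\}$, $-x-1\le r_i-s_i\le-1$, and if $r_i-s_i=-x-1$ then (D$\psi$) holds; (b) for $i>e'$, $-x\le r_i-s_i\le e'+1$, and if $r_i-s_i=e'+1$ then (D$\phi$) holds.
   Context: A pencil $A(s)=A_0+sA_1$ has rank equal to its rank over $\mathbb F(s)$. Homogeneous invariant factors are the invariant factors (homogeneous polynomials in $\mathbb F[s,t]$) of $tA_0+sA_1$, with conventions $\phi_i=1$ for $i<1$, $\phi_i=0$ for $i>\rho_1$ (similarly $\psi_i$). Column (row) minimal indices are the indices $k$ of the blocks $L_k(s)\in\mathbb F[s]^{k\times(k+1)}$ ($s$ on the diagonal, $1$ on superdiagonal), resp. $L_k(s)^T$, in the Kronecker canonical form, $q-\rho$ (resp. $p-\rho$) of them counting zeros. Conjugate of $(a_1,\dots,a_n)$ nonincreasing nonnegative: $(\bar a_1,\bar a_2,\dots)$, $\bar a_k=\#\{i:a_i\ge k\}$. *)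

From HB Require Import structures.
From mathcomp Require Import all_boot all_order all_algebra.
From mathcomp Require Import fraction mpoly.
Set Implicit Arguments. Unset Strict Implicit. Unset Printing Implicit Defensive.
Import Order.TTheory GRing.Theory Num.Theory.
Local Open Scope ring_scope.

Section Pencils.
Variable F : fieldType.

(* Bivariate polynomials F[s,t]: s = 'X_0, t = 'X_1. *)
Notation bipoly := {mpoly F[2]}.

Definition mdvd (a b : bipoly) : Prop := exists c : bipoly, b = c * a.

Definition is_gcd (g a b : bipoly) : Prop :=
  mdvd g a /\ mdvd g b /\ forall d, mdvd d a -> mdvd d b -> mdvd d g.

Definition tdeg (g : bipoly) : nat := (msize g).-1.

Definition pen p q (A0 A1 : 'M[F]_(p, q)) : 'M[{poly F}]_(p, q) :=
  \matrix_(i, j) ((A0 i j)%:P + 'X * (A1 i j)%:P).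

Definition hpen p q (A0 A1 : 'M[F]_(p, q)) : 'M[bipoly]_(p, q) :=
  \matrix_(i, j) ('X_1 * (A0 i j)%:MP + 'X_0 * (A1 i j)%:MP).

Definition pen_rank p q (A0 A1 : 'M[F]_(p, q)) : nat :=
  \rank (map_mx (fun a : {poly F} => FracField.tofrac a) (pen A0 A1)).

Definition gcd_minors p q (M : 'M[bipoly]_(p, q)) (k : nat) (D : bipoly) : Prop :=
  (forall (f : 'I_k -> 'I_p) (g : 'I_k -> 'I_q), mdvd D (\det (mxsub f g M))) /\
  (forall d, (forall (f : 'I_k -> 'I_p) (g : 'I_k -> 'I_q), mdvd d (\det (mxsub f g M)))
             -> mdvd d D).

(* phi 1, ..., phi r are homogeneous invariant factors of the pencil A0 + s A1
   of rank r : phi 1 * ... * phi k is the k-th determinantal divisor of t A0 + s A1. *)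
Definition hinv_factors p q (A0 A1 : 'M[F]_(p, q)) (phi : nat -> bipoly) : Prop :=
  forall k, (1 <= k <= pen_rank A0 A1)%N ->
    gcd_minors (hpen A0 A1) k (\prod_(1 <= i < k.+1) phi i).

Definition Lblock (k : nat) : 'M[{poly F}]_(k, k.+1) :=
  \matrix_(i < k, j < k.+1)
    (if (j == i :> nat) then 'X else if (j == i.+1 :> nat) then 1 else 0).

Fixpoint Lblocks (cs : seq nat) : 'M[{poly F}]_(sumn cs, sumn (map S cs)) :=
  match cs return 'M[{poly F}]_(sumn cs, sumn (map S cs)) with
  | [::] => 0
  | c :: cs' => block_mx (Lblock c) 0 0 (Lblocks cs')
  end.

Definition KCFmx (cs us : seq nat) n (R0 R1 : 'M[F]_n) :
  'M[{poly F}]_(sumn cs + sumn (map S us) + n, sumn (map S cs) + sumn us + n) :=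
  block_mx (block_mx (Lblocks cs) 0 0 (Lblocks us)^T) 0 0 (pen R0 R1).

(* cs (resp. us) is the list (with multiplicity, zeros included) of column
   (resp. row) minimal indices of A0 + s A1: the pencil is strictly equivalent
   to diag(L_{c}, L_{u}^T, regular part); the regular part is any regular
   pencil (which in turn is strictly equivalent to Jordan/infinite blocks). *)
Definition minimal_indices p q (A0 A1 : 'M[F]_(p, q)) (cs us : seq nat) : Prop :=
  exists n (R0 R1 : 'M[F]_n) (P : 'M[F]_p) (Q : 'M[F]_q)
         (Ep : (sumn cs + sumn (map S us) + n = p)%N)
         (Eq : (sumn (map S cs) + sumn us + n = q)%N),
    [/\ P \in unitmx, Q \in unitmx, \det (pen R0 R1) != 0 &
        map_mx polyC P *m pen A0 A1 *m map_mx polyC Q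
        = castmx (Ep, Eq) (KCFmx cs us R0 R1)].

End Pencils.

Definition conjseq (r0 : nat) (cs : seq nat) (k : nat) : nat :=
  if k == 0%N then r0 else count (fun c => (k <= c)%N) cs.

From HB Require Import structures.
From mathcomp Require Import all_boot all_order all_algebra.
From mathcomp Require Import mpoly fraction perm zify.
Set Implicit Arguments. Unset Strict Implicit. Unset Printing Implicit Defensive.
Import Order.TTheory GRing.Theory Num.Theory.
Local Open Scope ring_scope.

(* Let rho be the common rank.  Deleting one column of every block L_c and one
   row of every block L_u^T of the Kronecker form of t A0 + s A1 leaves the
   minors s^k det(t R0 + s R1) and t^k det(t R0 + s R1) of order rho, where
   t R0 + s R1 is the regular part.  The product phi_1 ... phi_rho divides both,
   so its degree is at most that of the regular part, i.e.
     sum deg phi_j + sum c_i + sum u_i <= rho.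
   Since sum c_i = sum_i r_i = sum_i min(r_i, s_i) + sum_i (r_i - s_i)^+ and
   deg gcd(phi_j, psi_j) <= deg phi_j, the hypothesis on G bounds the excess
   sum_i (r_i - s_i)^+ by max(e, e') + 1, with equality only when phi_1 is a
   unit and every phi_j is associate to gcd(phi_j, psi_j), i.e. (D phi).  Now
   if e > e', then r_i > s_i on the whole run x <= i <= e, and every index of
   the run contributes at least one to the excess: this gives the bounds on
   s_i - r_i inside and beyond the run, and the extreme values force equality.
   The case e' > e is symmetric. *)

(** * Degrees and divisibility in F[s,t] *)

Section TotalDegree.
Variable F : fieldType.
Implicit Types a b c d D R : {mpoly F[2]}.

Lemma msize_gt0 a : a != 0 -> (0 < msize a)%N.
Proof. by rewrite lt0n msize_poly_eq0. Qed.

Lemma tdegM a b : a != 0 -> b != 0 -> tdeg (a * b) = (tdeg a + tdeg b)%N.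
Proof.
move=> a0 b0; rewrite /tdeg msizeM //.
case: (msize a) (msize_gt0 a0) => // m _.
by case: (msize b) (msize_gt0 b0) => // n _; rewrite addSn addnS.
Qed.

Lemma mpolyX_neq0 (j : 'I_2) : 'X_j != 0 :> {mpoly F[2]}.
Proof. by rewrite -msize_poly_eq0 msizeX. Qed.

Lemma mdvd_trans a b c : mdvd a b -> mdvd b c -> mdvd a c.
Proof. by move=> [u ->] [v ->]; exists (v * u); rewrite mulrA. Qed.

Lemma mdvd_mull a b c : mdvd a b -> mdvd a (c * b).
Proof. by move=> [u ->]; exists (c * u); rewrite mulrA. Qed.

Lemma mdvd_sum (I : Type) (r : seq I) (P : pred I) (G : I -> {mpoly F[2]}) d :
  (forall i, P i -> mdvd d (G i)) -> mdvd d (\sum_(i <- r | P i) G i).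
Proof.
move=> dG; elim/big_rec: _ => [|i b Pi [u ->]]; first by exists 0; rewrite mul0r.
by have [v ->] := dG i Pi; exists (v + u); rewrite mulrDl.
Qed.

Lemma mdvd_neq0 a b : mdvd a b -> b != 0 -> a != 0.
Proof. by move=> [u ->]; apply: contraNneq => ->; rewrite mulr0. Qed.

Lemma mdvd_tdeg_le a b : mdvd a b -> b != 0 -> (tdeg a <= tdeg b)%N.
Proof.
move=> [u ->]; rewrite mulf_eq0 negb_or => /andP[u0 a0].
by rewrite tdegM // leq_addl.
Qed.

Lemma mdvd_tdeg0 a b : a != 0 -> tdeg a = 0%N -> mdvd a b.
Proof.
move=> a0 tdeg_a; have /msize_poly1P[k k0 ->] : msize a == 1%N.
  by move: tdeg_a (msize_gt0 a0); rewrite /tdeg; lia.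
by exists (b * (k^-1)%:MP); rewrite -mulrA -mpolyCM mulVf // mpolyC1 mulr1.
Qed.

Lemma mdvd_tdeg_eq a b : mdvd a b -> b != 0 -> tdeg a = tdeg b -> mdvd b a.
Proof.
move=> [u ->]; rewrite mulf_eq0 negb_or => /andP[u0 a0].
rewrite tdegM // -{1}[tdeg a]add0n => /addIn /esym tdeg_u.
have [v uv] := mdvd_tdeg0 1 u0 tdeg_u.
by exists v; rewrite mulrA -uv mul1r.
Qed.

Lemma mlead_le_of_mdvd_XnM D R (j : 'I_2) n i : R != 0 ->
  mdvd D ('X_j ^+ n * R) -> i != j -> (mlead D i <= mlead R i)%N.
Proof.
move=> R0 [c cD] ij; have X0 : ('X_j : {mpoly F[2]}) ^+ n != 0.
  by rewrite expf_neq0 // mpolyX_neq0.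
have : c * D != 0 by rewrite -cD mulf_neq0.
rewrite mulf_eq0 negb_or => /andP[c0 D0].
move/(congr1 (@mlead 2 F)): cD; rewrite !mleadM // mleadX ?mleadXm ?mpolyX_neq0 //.
move=> /mnmP /(_ i); rewrite !mnmDE mulmnE mnm1E eq_sym (negbTE ij) mul0n add0n => ->.
exact: leq_addl.
Qed.

(* The total degree of [D] is the sum of the exponents of [X_0] and [X_1] in its
   leading monomial; each one is bounded using the divisibility by a power of
   the other variable. *)
Lemma tdeg_le_of_mdvd_XnM D R n : R != 0 ->
  mdvd D ('X_0 ^+ n * R) -> mdvd D ('X_1 ^+ n * R) -> (tdeg D <= tdeg R)%N.
Proof.
move=> R0 D0R D1R; have D0 : D != 0.
  by apply: mdvd_neq0 D0R _; rewrite mulf_neq0 // expf_neq0 // mpolyX_neq0.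
rewrite /tdeg -(mlead_deg D0) -(mlead_deg R0) /= !mdegE; apply: leq_sum => i _.
case: (eqVneq i 0) => [->|i0]; last exact: mlead_le_of_mdvd_XnM D0R i0.
by apply: mlead_le_of_mdvd_XnM D1R _.
Qed.

Lemma msizeM_leq a b : (msize (a * b) <= (msize a + msize b).-1)%N.
Proof.
have [->|a0] := eqVneq a 0; first by rewrite mul0r msize0.
have [->|b0] := eqVneq b 0; first by rewrite mulr0 msize0.
by rewrite msizeM.
Qed.

Lemma tdeg_prod (I : Type) (r : seq I) (P : pred I) (G : I -> {mpoly F[2]}) :
  \prod_(i <- r | P i) G i != 0 ->
  tdeg (\prod_(i <- r | P i) G i) = (\sum_(i <- r | P i) tdeg (G i))%N.
Proof.
elim: r => [|i r IH]; first by rewrite !big_nil /tdeg msize1.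
rewrite !big_cons; case: (P i) => // /[dup] Gr0.
by rewrite mulf_eq0 negb_or => /andP[Gi0 r0]; rewrite tdegM // IH.
Qed.

Lemma msize_prod_linear n (G : 'I_n -> {mpoly F[2]}) :
  (forall i, msize (G i) <= 2)%N -> (msize (\prod_i G i) <= n.+1)%N.
Proof.
elim: n G => [|n IH] G G_le; first by rewrite big_ord0 msize1.
rewrite big_ord_recr /=; apply: leq_trans (msizeM_leq _ _) _.
rewrite -subn1 leq_subLR.
by apply: leq_trans (leq_add (IH _ (fun i => G_le _)) (G_le ord_max)) _; lia.
Qed.

Lemma tdeg_det_linear n (M : 'M[{mpoly F[2]}]_n) :
  (forall i j, msize (M i j) <= 2)%N -> (tdeg (\det M) <= n)%N.
Proof.
move=> M_le; rewrite /tdeg; suff : (msize (\det M) <= n.+1)%N by lia.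
apply: (big_ind (fun a : {mpoly F[2]} => msize a <= n.+1)%N) => [|a b|s _].
- by rewrite msize0.
- by move=> a_le b_le; apply: leq_trans (msizeD_le _ _) _; rewrite geq_max a_le b_le.
by rewrite mulr_sign; case: ifP; rewrite ?msizeN msize_prod_linear.
Qed.

Lemma tdeg_det_hpen n (R0 R1 : 'M[F]_n) : (tdeg (\det (hpen R0 R1)) <= n)%N.
Proof.
apply: tdeg_det_linear => i j; rewrite mxE; apply: leq_trans (msizeD_le _ _) _.
by rewrite geq_max !(leq_trans (msizeM_leq _ _)) // msizeX mdeg1 msizeC; case: eqP.
Qed.

End TotalDegree.

(** * Minors of the Kronecker canonical form *)

Lemma det_mulmx_rect (R : comPzRingType) k p (X : 'M[R]_(k, p)) (N : 'M[R]_(p, k)) :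
  \det (X *m N) = \sum_(h : {ffun 'I_k -> 'I_p}) (\prod_i X i (h i)) * \det (rowsub h N).
Proof.
rewrite /determinant.
transitivity (\sum_(s : 'S_k) \sum_(h : {ffun 'I_k -> 'I_p})
     (-1) ^+ s * ((\prod_i X i (h i)) * \prod_i N (h i) (s i))).
  apply: eq_bigr => s _; rewrite -big_distrr /=; congr (_ * _).
  under eq_bigr do rewrite mxE.
  rewrite (bigA_distr_bigA (fun i l => X i l * N l (s i))) /=.
  by apply: eq_bigr => h _; rewrite big_split.
rewrite exchange_big /=; apply: eq_bigr => h _.
rewrite big_distrr /=; apply: eq_bigr => s _.
by rewrite mulrCA; congr (_ * (_ * _)); apply: eq_bigr => i _; rewrite mxE.
Qed.

Lemma mdvd_det_mulmx (F : fieldType) k p q (M : 'M[{mpoly F[2]}]_(p, q)) D :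
  (forall (f : 'I_k -> 'I_p) (g : 'I_k -> 'I_q), mdvd D (\det (mxsub f g M))) ->
  forall (X : 'M_(k, p)) (Y : 'M_(q, k)), mdvd D (\det (X *m M *m Y)).
Proof.
move=> D_minors X Y; rewrite -mulmxA det_mulmx_rect; apply: mdvd_sum => h _.
rewrite -mul_rowsub_mx -det_tr trmx_mul det_mulmx_rect; apply: mdvd_mull.
apply: mdvd_sum => h' _; apply: mdvd_mull.
have -> : rowsub h' (rowsub h M)^T = (mxsub h h' M)^T by apply/matrixP => i j; rewrite !mxE.
by rewrite det_tr.
Qed.

Section KroneckerBlocks.
Variable R : comPzRingType.
Implicit Types (a b z : R) (cs us : seq nat).

Definition Lmx a b k : 'M[R]_(k, k.+1) :=
  \matrix_(i < k, j < k.+1) (if j == i :> nat then a else if j == i.+1 :> nat then b else 0).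

Fixpoint diag_Lmx a b cs : 'M[R]_(sumn cs, sumn (map S cs)) :=
  match cs return 'M[R]_(sumn cs, sumn (map S cs)) with
  | [::] => 0
  | c :: cs' => block_mx (Lmx a b c) 0 0 (diag_Lmx a b cs')
  end.

Definition kcf_mx a b cs us n (M : 'M[R]_n) :
  'M[R]_(sumn cs + sumn (map S us) + n, sumn (map S cs) + sumn us + n) :=
  block_mx (block_mx (diag_Lmx a b cs) 0 0 (diag_Lmx a b us)^T) 0 0 M.

Definition drop_last_col k : 'M[R]_(k.+1, k) := colsub (widen_ord (leqnSn k)) 1%:M.
Definition drop_first_col k : 'M[R]_(k.+1, k) := colsub (lift ord0) 1%:M.

Lemma det_Lmx_drop_last a b k : \det (Lmx a b k *m drop_last_col k) = a ^+ k.
Proof.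
rewrite mulmx_colsub mulmx1 -det_tr det_trig.
  by rewrite (eq_bigr (fun _ => a)) ?prodr_const ?card_ord // => i _; rewrite !mxE eqxx.
apply/is_trig_mxP => i j ij; rewrite !mxE /= ifN; last by rewrite neq_ltn ij.
by rewrite ifN // neq_ltn ltnS ltnW.
Qed.

Lemma det_Lmx_drop_first a b k : \det (Lmx a b k *m drop_first_col k) = b ^+ k.
Proof.
rewrite mulmx_colsub mulmx1 det_trig.
  rewrite (eq_bigr (fun _ => b)) ?prodr_const ?card_ord // => i _.
  by rewrite !mxE /= /bump leq0n add1n ifN ?eqxx // neq_ltn ltnSn orbT.
apply/is_trig_mxP => i j ij; rewrite !mxE /= /bump leq0n add1n.
have ij1 : (i < j.+1)%N by rewrite ltnS ltnW.
by rewrite eqSS !ifN // neq_ltn ?ij ?ij1 orbT.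
Qed.

Fixpoint diag_sel (sel : forall k, 'M[R]_(k.+1, k)) cs : 'M[R]_(sumn (map S cs), sumn cs) :=
  match cs return 'M[R]_(sumn (map S cs), sumn cs) with
  | [::] => 0
  | c :: cs' => block_mx (sel c) 0 0 (diag_sel sel cs')
  end.

Section Minor.
Variables (a b z : R) (sel : forall k, 'M[R]_(k.+1, k)).
Hypothesis det_Lmx_sel : forall k, \det (Lmx a b k *m sel k) = z ^+ k.

Lemma det_diag_Lmx_sel cs : \det (diag_Lmx a b cs *m diag_sel sel cs) = z ^+ sumn cs.
Proof.
elim: cs => [|c cs IH] /=; first by rewrite det_mx00 expr0.
by rewrite mulmx_block !mulmx0 !mul0mx !addr0 !add0r det_ublock det_Lmx_sel IH exprD.
Qed.

(* Deleting one column from each block [L_c] and one row from each [L_u^T]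
   leaves a square block-triangular minor of [kcf_mx]. *)
Lemma det_kcf_minor cs us n (M : 'M[R]_n) :
  \det (block_mx (block_mx 1%:M 0 0 (diag_sel sel us)^T) 0 0 1%:M *m kcf_mx a b cs us M
        *m block_mx (block_mx (diag_sel sel cs) 0 0 1%:M) 0 0 1%:M)
  = z ^+ (sumn cs + sumn us) * \det M.
Proof.
rewrite /kcf_mx; do 3!rewrite ?mulmx_block ?mulmx0 ?mul0mx ?addr0 ?add0r ?mul1mx ?mulmx1.
by rewrite !det_ublock -trmx_mul det_tr !det_diag_Lmx_sel exprD.
Qed.

End Minor.
End KroneckerBlocks.

Lemma Lblocks_diag_Lmx (F : fieldType) cs : Lblocks F cs = diag_Lmx 'X 1 cs.
Proof. by elim: cs => [|c cs IH] //=; rewrite IH. Qed.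

(** * Homogenization and rank *)

Section Homogenization.
Variable F : fieldType.

(* Homogenization [t f_0 + s f_1] of a pencil entry [f_0 + f_1 s]; higher
   coefficients are ignored. *)
Definition homog1 (f : {poly F}) : {mpoly F[2]} := 'X_1 * (f`_0)%:MP + 'X_0 * (f`_1)%:MP.

Lemma homog1_is_linear : linear homog1.
Proof.
move=> c f g; rewrite /homog1 !coefD !coefZ !raddfD /= !mpolyCM.
by rewrite !mulrDr addrACA -!mul_mpolyC !mulrA ![_ * c%:MP]mulrC.
Qed.

HB.instance Definition _ :=
  GRing.isLinear.Build F {poly F} {mpoly F[2]} _ homog1 homog1_is_linear.

Lemma map_homog1_mulmx m n k l (P : 'M[F]_(m, n)) (M : 'M[{poly F}]_(n, k)) (Q : 'M[F]_(k, l)) :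
  map_mx homog1 (map_mx polyC P *m M *m map_mx polyC Q) =
  map_mx (@mpolyC 2 F) P *m map_mx homog1 M *m map_mx (@mpolyC 2 F) Q.
Proof.
apply/matrixP => i j; rewrite !mxE linear_sum; apply: eq_bigr => l' _.
rewrite !mxE mulrC mul_polyC linearZ mulrC mul_mpolyC /= linear_sum; congr (_ *: _).
by apply: eq_bigr => k' _; rewrite !mxE mul_polyC linearZ mul_mpolyC.
Qed.

Lemma map_homog1_pen p q (A0 A1 : 'M[F]_(p, q)) : map_mx homog1 (pen A0 A1) = hpen A0 A1.
Proof.
apply/matrixP => i j; rewrite !mxE /homog1 !coefD !coefC coefXM coefXM !coefC /=.
by rewrite addr0 add0r.
Qed.

Lemma map_homog1_diag_Lmx cs : map_mx homog1 (diag_Lmx 'X 1 cs) = diag_Lmx 'X_0 'X_1 cs.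
Proof.
have homog1X : homog1 'X = 'X_0 by rewrite /homog1 !coefX /= mulr0 add0r mulr1.
have homog11 : homog1 1 = 'X_1 by rewrite /homog1 !coef1 /= mulr0 addr0 mulr1.
elim: cs => [|c cs IH] /=; first by rewrite map_mx0.
rewrite map_block_mx IH !map_mx0; congr block_mx; apply/matrixP => i j; rewrite !mxE.
by case: ifP => _; last case: ifP => _; rewrite ?homog1X ?homog11 ?linear0.
Qed.

Lemma map_homog1_KCF cs us n (R0 R1 : 'M[F]_n) :
  map_mx homog1 (KCFmx cs us R0 R1) = kcf_mx 'X_0 'X_1 cs us (hpen R0 R1).
Proof.
rewrite /KCFmx /kcf_mx !map_block_mx !map_mx0 map_homog1_pen -map_trmx !Lblocks_diag_Lmx.
by rewrite !map_homog1_diag_Lmx.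
Qed.

End Homogenization.

Lemma mxrank_mulmx_unit (K : fieldType) m n (U : 'M[K]_m) (M : 'M[K]_(m, n)) V :
  U \in unitmx -> V \in unitmx -> \rank (U *m M *m V) = \rank M.
Proof.
move=> Uu Vu; rewrite mxrankMfree ?row_free_unit //.
by rewrite (eqmxMfull _ (_ : row_full U)) // row_full_unit.
Qed.

Section PencilRank.
Variable F : fieldType.
Local Notation tofrac := (@FracField.tofrac {poly F}).

Lemma det_hpen_neq0 n (R0 R1 : 'M[F]_n) : \det (pen R0 R1) != 0 -> \det (hpen R0 R1) != 0.
Proof.
pose dehomog := mmap (@polyC F) (fun i : 'I_2 => if i == 0 then 'X else 1).
have -> : pen R0 R1 = map_mx dehomog (hpen R0 R1).
  apply/matrixP => i j; rewrite !mxE /dehomog rmorphD !rmorphM /= !mmapC !mmapX !mmap1U /=.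
  by rewrite mul1r.
by rewrite det_map_mx; apply: contraNneq => ->; rewrite rmorph0.
Qed.

Lemma rank_diag_Lmx cs : \rank (map_mx tofrac (diag_Lmx 'X 1 cs)) = sumn cs.
Proof.
apply/eqP; rewrite eqn_leq rank_leq_row /=.
have unit_minor : map_mx tofrac (diag_Lmx 'X 1 cs *m diag_sel (@drop_first_col _) cs) \in unitmx.
  rewrite unitmxE det_map_mx (det_diag_Lmx_sel (det_Lmx_drop_first _ _)).
  by rewrite expr1n rmorph1 unitr1.
have := mxrankM_maxl (map_mx tofrac (diag_Lmx (R := {poly F}) 'X 1 cs))
  (map_mx tofrac (diag_sel (@drop_first_col _) cs)).
by rewrite -map_mxM (mxrank_unit unit_minor).
Qed.

Lemma rank_KCF cs us n (R0 R1 : 'M[F]_n) : \det (pen R0 R1) != 0 ->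
  \rank (map_mx tofrac (KCFmx cs us R0 R1)) = (sumn cs + sumn us + n)%N.
Proof.
move=> detR; rewrite /KCFmx !map_block_mx !map_mx0 !rank_diag_block_mx.
rewrite -map_trmx mxrank_tr !Lblocks_diag_Lmx !rank_diag_Lmx mxrank_unit //.
by rewrite unitmxE det_map_mx unitfE tofrac_eq0.
Qed.

Lemma pen_rank_equiv p q (A0 A1 : 'M[F]_(p, q)) (P : 'M[F]_p) (Q : 'M[F]_q) M :
  P \in unitmx -> Q \in unitmx -> map_mx polyC P *m pen A0 A1 *m map_mx polyC Q = M ->
  pen_rank A0 A1 = \rank (map_mx tofrac M).
Proof.
move=> Pu Qu <-; rewrite !map_mxM; apply/esym/mxrank_mulmx_unit.
  by rewrite unitmxE !det_map_mx unitfE tofrac_eq0 polyC_eq0 -unitfE -unitmxE.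
by rewrite unitmxE !det_map_mx unitfE tofrac_eq0 polyC_eq0 -unitfE -unitmxE.
Qed.

End PencilRank.

(** * The degree bound *)

Section PencilDegrees.
Variable F : fieldType.

(* [D] divides the minors [s^k det(t R0 + s R1)] and [t^k det(t R0 + s R1)],
   with [k = sumn cs + sumn us]. *)
Lemma minors_divisor_tdeg_le cs us n (R0 R1 : 'M[F]_n)
    (p := (sumn cs + sumn (map S us) + n)%N) (q := (sumn (map S cs) + sumn us + n)%N)
    (A0 A1 : 'M[F]_(p, q)) (P : 'M[F]_p) (Q : 'M[F]_q) (D : {mpoly F[2]})
    (N := (sumn cs + sumn us + n)%N) :
  map_mx (@mpolyC 2 F) P *m hpen A0 A1 *m map_mx (@mpolyC 2 F) Q
    = kcf_mx 'X_0 'X_1 cs us (hpen R0 R1) ->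
  \det (pen R0 R1) != 0 ->
  (forall (f : 'I_N -> 'I_p) (g : 'I_N -> 'I_q), mdvd D (\det (mxsub f g (hpen A0 A1)))) ->
  D != 0 /\ (tdeg D <= n)%N.
Proof.
move=> equiv /det_hpen_neq0 detR D_minors.
have D_dvd z sel : (forall k, \det (Lmx 'X_0 'X_1 k *m sel k) = z ^+ k) ->
    mdvd D (z ^+ (sumn cs + sumn us) * \det (hpen R0 R1)).
  move=> det_sel; rewrite -(det_kcf_minor det_sel) -equiv !mulmxA.
  by rewrite -(mulmxA _ (map_mx _ Q)); apply: mdvd_det_mulmx.
have D_dvd0 := D_dvd _ _ (det_Lmx_drop_last _ _).
have D_dvd1 := D_dvd _ _ (det_Lmx_drop_first _ _).
split; first by apply: mdvd_neq0 D_dvd0 _; rewrite mulf_neq0 // expf_neq0 // mpolyX_neq0.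
exact: leq_trans (tdeg_le_of_mdvd_XnM detR D_dvd0 D_dvd1) (tdeg_det_hpen _ _).
Qed.

Lemma pencil_degree_bound p q (A0 A1 : 'M[F]_(p, q)) (phi : nat -> {mpoly F[2]}) cs us :
  hinv_factors A0 A1 phi -> minimal_indices A0 A1 cs us ->
  let rho := pen_rank A0 A1 in
  [/\ (rho <= p)%N, (forall j, (1 <= j <= rho)%N -> phi j != 0) &
      (\sum_(1 <= j < rho.+1) tdeg (phi j) + sumn cs + sumn us <= rho)%N].
Proof.
move=> hinv [n [R0 [R1 [P [Q [Ep [Eq [Pu Qu detR equiv]]]]]]]] rho.
subst p q; rewrite castmx_id in equiv.
have rhoE : rho = (sumn cs + sumn us + n)%N by rewrite /rho (pen_rank_equiv Pu Qu equiv) rank_KCF.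
have rho_le : (rho <= sumn cs + sumn (map S us) + n)%N.
  by rewrite rhoE !leq_add2r leq_add2l; elim: (us) => //= u us'; lia.
have [rho0|rho_gt0] := posnP rho; first by rewrite rho0 big_geq //; split=> [|j|]; lia.
have [D_minors _] := hinv rho (ltac:(lia)); rewrite rhoE in D_minors.
have hequiv : map_mx (@mpolyC 2 F) P *m hpen A0 A1 *m map_mx (@mpolyC 2 F) Q
    = kcf_mx 'X_0 'X_1 cs us (hpen R0 R1).
  by rewrite -map_homog1_pen -map_homog1_mulmx equiv map_homog1_KCF.
have [D0 tdegD] := minors_divisor_tdeg_le hequiv detR D_minors.
split=> //.
- move=> j j_rho; apply: contraNneq D0 => phi0.
  rewrite -rhoE (big_cat_nat _ (n := j)) /=; [|lia|lia].
  by rewrite [X in _ * X]big_ltn ?phi0 ?mul0r ?mulr0 //; lia.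
- by move: tdegD; rewrite tdeg_prod // -rhoE; lia.
Qed.

End PencilDegrees.

(** * Conjugate partitions *)

Lemma all_leq_sumn N cs : (sumn cs <= N)%N -> all (fun c => c <= N)%N cs.
Proof.
elim: cs => //= c cs IH le_N; rewrite (leq_trans (leq_addr _ _) le_N) IH //.
exact: leq_trans (leq_addl _ _) le_N.
Qed.

Lemma sum_conjseq N r0 cs : all (fun c => c <= N)%N cs ->
  (\sum_(1 <= i < N.+1) conjseq r0 cs i = sumn cs)%N.
Proof.
move=> cs_le; rewrite (@eq_big_nat _ _ _ _ _ _ (fun i => count (fun c => i <= c)%N cs)); last first.
  by move=> i /andP[i_gt0 _]; rewrite /conjseq gtn_eqF.
elim: cs cs_le => [_|c cs IH /= /andP[c_le cs_le]]; first by rewrite big1.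
rewrite big_split /= IH //; congr (_ + _)%N.
rewrite (@big_cat_nat _ _ _ c.+1) //= ?ltnS //.
rewrite [X in (_ + X)%N]big_nat_cond [X in (_ + X)%N]big1 => [|i /andP[/andP[ci _] _]]; last first.
  by rewrite leqNgt ci.
rewrite big_nat_cond (eq_bigr (fun=> 1%N)) => [|i /andP[/andP[_ ic] _]]; last by rewrite -ltnS ic.
by rewrite -big_nat_cond sum_nat_const_nat muln1 addn0 subn1.
Qed.

Lemma conjseq_eq0 N r0 cs k : all (fun c => c <= N)%N cs -> (N < k)%N -> conjseq r0 cs k = 0%N.
Proof.
move=> /allP cs_le Nk; rewrite /conjseq gtn_eqF ?(leq_ltn_trans _ Nk) //.
apply/eqP; rewrite -leqn0 leqNgt -has_count; apply/hasPn => c /cs_le cN.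
by rewrite -ltnNge (leq_ltn_trans cN Nk).
Qed.

Lemma pencil_conj_degree_bound (F : fieldType) p q (A0 A1 : 'M[F]_(p, q))
    (phi : nat -> {mpoly F[2]}) cs us :
  hinv_factors A0 A1 phi -> minimal_indices A0 A1 cs us ->
  let rho := pen_rank A0 A1 in
  [/\ (rho <= p)%N, (forall j, (1 <= j <= rho)%N -> phi j != 0),
      (forall r0 u0, \sum_(1 <= j < rho.+1) tdeg (phi j) + \sum_(1 <= i < rho.+1) conjseq r0 cs i
                     + \sum_(1 <= i < rho.+1) conjseq u0 us i <= rho)%N &
      (forall r0 i, (rho < i)%N -> conjseq r0 cs i = 0%N)].
Proof.
move=> hA mA rho; have [p_le phi_neq0 deg_le] := pencil_degree_bound hA mA.
have cs_le : all (fun c => c <= rho)%N cs by apply: all_leq_sumn; lia.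
have us_le : all (fun u => u <= rho)%N us by apply: all_leq_sumn; lia.
by split=> // [r0 u0|r0 i]; [rewrite !sum_conjseq | exact: conjseq_eq0].
Qed.

(** * The excess of one conjugate partition over another *)

Lemma sum_nat_split_at (f : nat -> nat) m i n : (m <= i < n)%N ->
  (\sum_(m <= k < n) f k = \sum_(m <= k < i) f k + f i + \sum_(i.+1 <= k < n) f k)%N.
Proof.
by move=> /andP[mi i_n]; rewrite (@big_cat_nat _ _ _ i) ?(ltnW i_n) //= (big_ltn i_n) addnA.
Qed.

Lemma sub_leq_sum_pos (f : nat -> nat) m a b n : (m <= a)%N -> (b <= n)%N ->
  (forall k, (a <= k < b)%N -> (0 < f k)%N) -> (b - a <= \sum_(m <= k < n) f k)%N.
Proof.
move=> ma bn f_gt0; case: (leqP a b) => [ab|/ltnW]; last by rewrite -subn_eq0 => /eqP ->.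
rewrite (@big_cat_nat _ _ _ a) ?(leq_trans ab bn) // (@big_cat_nat _ _ _ b a) //=.
apply: leq_trans (leq_addl _ _); apply: leq_trans (leq_addr _ _).
rewrite -[(b - a)%N]muln1 -sum_nat_const_nat big_nat_cond [X in (_ <= X)%N]big_nat_cond.
by apply: leq_sum => k /andP[k_ab _]; exact: f_gt0.
Qed.

(* Truncated subtraction: this is the sum of the positive parts of [r i - s i]. *)
Definition excess rho (r s : nat -> nat) : nat := \sum_(1 <= i < rho.+1) (r i - s i).

Lemma sum_minn_excess rho (r s : nat -> nat) :
  (\sum_(1 <= i < rho.+1) r i = \sum_(1 <= i < rho.+1) minn (r i) (s i) + excess rho r s)%N.
Proof. by rewrite /excess -big_split; apply: eq_bigr => i _ /=; lia. Qed.

Lemma leq_excess rho (r s : nat -> nat) i : (0 < i)%N ->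
  (forall k, (rho < k)%N -> r k = 0%N) -> (r i - s i <= excess rho r s)%N.
Proof.
move=> i_gt0 r_eq0; case: (leqP i rho) => [i_rho|/r_eq0 ->]; last by rewrite sub0n.
by rewrite /excess (@sum_nat_split_at _ 1 i); lia.
Qed.

Section ExcessRun.
Variables (rho x E : nat) (r s : nat -> nat).
Hypothesis r_eq0 : forall i, (rho < i)%N -> r i = 0%N.
Hypothesis s_eq0 : forall i, (rho < i)%N -> s i = 0%N.
Hypothesis x_gt0 : (0 < x)%N.
Hypothesis rs_x : r x <> s x.
Hypothesis x_le_E : (x <= E)%N.
Hypothesis sr_run : forall j, (x <= j < E)%N -> (s j < r j)%N.

Lemma run_le_rho : (E <= rho.+1)%N.
Proof.
have x_rho : (x <= rho)%N.
  by case: (leqP x rho) => // /[dup] /r_eq0 rx /s_eq0 sx; case: rs_x; rewrite rx sx.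
by case: (leqP E rho.+1) => // rhoE; have := @sr_run rho.+1; rewrite r_eq0 ?s_eq0 //; lia.
Qed.

Lemma excess_run_inside i : (x <= i < E)%N -> (r i - s i + (E - x.+1) <= excess rho r s)%N.
Proof.
move=> i_run; have := run_le_rho; have := sr_run i_run => sr_i E_rho.
have before : (i - x <= \sum_(1 <= k < i) (r k - s k))%N.
  by apply: sub_leq_sum_pos => // k k_run; rewrite subn_gt0 sr_run //; lia.
have after : (E - i.+1 <= \sum_(i.+1 <= k < rho.+1) (r k - s k))%N.
  by apply: sub_leq_sum_pos => // k k_run; rewrite subn_gt0 sr_run //; lia.
by rewrite /excess (@sum_nat_split_at _ 1 i); lia.
Qed.

Lemma excess_run_after i : (E <= i)%N -> (s i < r i)%N -> (r i - s i + (E - x) <= excess rho r s)%N.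
Proof.
move=> Ei sri; have i_rho : (i <= rho)%N by case: (leqP i rho) => // /r_eq0 ri; rewrite ri in sri.
have before : (E - x <= \sum_(1 <= k < i) (r k - s k))%N.
  by apply: sub_leq_sum_pos => // k k_run; rewrite subn_gt0 sr_run.
by rewrite /excess (@sum_nat_split_at _ 1 i); lia.
Qed.

Lemma conj_diff_bounds (Dr Ds : Prop) :
  (excess rho r s <= E)%N -> (excess rho s r <= E)%N ->
  ((E <= excess rho r s)%N -> Dr) -> ((E <= excess rho s r)%N -> Ds) ->
  (forall i, (x <= i)%N -> i%:Z <= E%:Z - 1 ->
     - x%:Z - 1 <= (s i)%:Z - (r i)%:Z <= -1 /\
     ((s i)%:Z - (r i)%:Z = - x%:Z - 1 -> Dr)) /\
  (forall i, E%:Z - 1 < i%:Z ->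
     - x%:Z <= (s i)%:Z - (r i)%:Z <= E%:Z - 1 + 1 /\
     ((s i)%:Z - (r i)%:Z = E%:Z - 1 + 1 -> Ds)).
Proof.
move=> ex_rs ex_sr Dr_of Ds_of; split=> i.
- move=> xi iE; have i_run : (x <= i < E)%N by lia.
  have := excess_run_inside i_run; have := sr_run i_run => sr gap.
  by split; [lia | move=> eq; apply: Dr_of; lia].
- move=> Ei; have {}Ei : (E <= i)%N by lia.
  have := @leq_excess rho s r i (leq_trans x_gt0 (leq_trans x_le_E Ei)) s_eq0.
  have := excess_run_after Ei => rs_gap sr_le.
  by split; [lia | move=> eq; apply: Ds_of; lia].
Qed.

End ExcessRun.

Section GcdDegrees.
Variables (F : fieldType) (rho : nat) (phi psi g : nat -> {mpoly F[2]}).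
Hypothesis phi_neq0 : forall j, (1 <= j <= rho)%N -> phi j != 0.
Hypothesis g_dvd_phi : forall j, (2 <= j <= rho)%N -> mdvd (g j) (phi j).
Hypothesis g_dvd_psi : forall j, (2 <= j <= rho)%N -> mdvd (g j) (psi j).

Lemma tdeg_gcd_le j : (2 <= j <= rho)%N -> (tdeg (g j) <= tdeg (phi j))%N.
Proof. by move=> j_rho; apply: mdvd_tdeg_le; [apply: g_dvd_phi | apply: phi_neq0]; lia. Qed.

Lemma sum_tdeg_gcd_le :
  (\sum_(2 <= j < rho.+1) tdeg (g j) <= \sum_(2 <= j < rho.+1) tdeg (phi j))%N.
Proof.
rewrite big_nat_cond [X in (_ <= X)%N]big_nat_cond.
by apply: leq_sum => j /andP[j_rho _]; apply: tdeg_gcd_le; lia.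
Qed.

Lemma mdvd_of_sum_tdeg_gcd :
  (\sum_(1 <= j < rho.+1) tdeg (phi j) <= \sum_(2 <= j < rho.+1) tdeg (g j))%N ->
  forall j, (1 <= j <= rho)%N -> mdvd (phi j) (psi j).
Proof.
move=> sum_le j j_rho; have sum_ge := sum_tdeg_gcd_le.
rewrite big_ltn in sum_le; last lia.
have gap : (\sum_(2 <= i < rho.+1) (tdeg (phi i) - tdeg (g i)) =
    \sum_(2 <= i < rho.+1) tdeg (phi i) - \sum_(2 <= i < rho.+1) tdeg (g i))%N.
  rewrite big_nat_cond sumnB -?big_nat_cond // => i /andP[i_rho _].
  by apply: tdeg_gcd_le; lia.
have [phi1 /eqP gap0] : tdeg (phi 1) = 0%N /\
    (\sum_(2 <= i < rho.+1) (tdeg (phi i) - tdeg (g i)) = 0)%N by rewrite gap; lia.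
have [->|j_neq1] := eqVneq j 1%N; first by apply: mdvd_tdeg0 _ _ phi1; apply: phi_neq0; lia.
have j_range : (2 <= j <= rho)%N by lia.
move: gap0; rewrite sum_nat_seq_eq0 => /allP /(_ j); rewrite mem_index_iota.
move=> /(_ (ltac:(lia))) /eqP gap_j.
apply: mdvd_trans (g_dvd_psi j_range).
apply: mdvd_tdeg_eq (g_dvd_phi j_range) (phi_neq0 _) _; first lia.
by have := tdeg_gcd_le j_range; lia.
Qed.

Lemma excess_bound_gcd (M U : nat) (r s : nat -> nat) :
  (rho <= \sum_(1 <= i < rho.+1) minn (r i) (s i) + M + \sum_(1 <= i < rho) tdeg (g i.+1) + U)%N ->
  (\sum_(1 <= j < rho.+1) tdeg (phi j) + \sum_(1 <= i < rho.+1) r i + U <= rho)%N ->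
  (excess rho r s <= M)%N /\
  ((M <= excess rho r s)%N -> forall j, (1 <= j <= rho)%N -> mdvd (phi j) (psi j)).
Proof.
have -> : (\sum_(1 <= i < rho) tdeg (g i.+1) = \sum_(2 <= j < rho.+1) tdeg (g j))%N.
  by rewrite [RHS]big_add1.
have phi_tail : (\sum_(2 <= j < rho.+1) tdeg (phi j) <= \sum_(1 <= j < rho.+1) tdeg (phi j))%N.
  by case: (posnP rho) => [->|rho_gt0]; [rewrite !big_geq | rewrite [leqRHS]big_ltn ?leq_addl].
have := sum_minn_excess rho r s; have := sum_tdeg_gcd_le => gcd_le excess_eq HG deg_le.
by split=> [|M_le]; [lia | apply: mdvd_of_sum_tdeg_gcd; lia].
Qed.

End GcdDegrees.

Lemma sum_Posz (f : nat -> nat) m n :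
  \sum_(m <= i < n) (f i)%:Z = (\sum_(m <= i < n) f i)%N%:Z.
Proof. by rewrite (big_morph Posz PoszD (erefl (Posz 0))). Qed.

Theorem lemma5p1 (F : closedFieldType) (p q : nat) (A0 A1 B0 B1 : 'M[F]_(p, q))
  (phi psi : nat -> {mpoly F[2]}) (cs ds us vs : seq nat)
  (g : nat -> {mpoly F[2]}) (x E E' : nat) :
  let rho1 := pen_rank A0 A1 in
  let rho2 := pen_rank B0 B1 in
  let rho := minn rho1 rho2 in
  let r := conjseq (q - rho1) cs in
  let s := conjseq (q - rho2) ds in
  let r' := conjseq (p - rho1) us in
  let s' := conjseq (p - rho2) vs in
  let e : int := E%:Z - 1 in
  let e' : int := E'%:Z - 1 in
  let G : int := rho%:Z - 1 - (\sum_(1 <= i < rho) (tdeg (g i.+1))%:Z)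
                 - (\sum_(1 <= i < rho.+1) (r' i)%:Z) in
  let Dphi := forall j, (1 <= j <= rho)%N -> mdvd (phi j) (psi j) in
  let Dpsi := forall j, (1 <= j <= rho)%N -> mdvd (psi j) (phi j) in
  hinv_factors A0 A1 phi -> hinv_factors B0 B1 psi ->
  minimal_indices A0 A1 cs us -> minimal_indices B0 B1 ds vs ->
  (* g (i+1) is a gcd of phi_(i+1) and psi_(i+1) *)
  (forall j, (2 <= j <= rho)%N -> is_gcd (g j) (phi j) (psi j)) ->
  r <> s -> (forall i, r' i = s' i) ->
  (* x = min {i : r_i <> s_i} *)
  r x <> s x -> (forall i, (i < x)%N -> r i = s i) ->
  (* E = e + 1 = min {j >= x : s_j >= r_j} *)
  (x <= E)%N -> (r E <= s E)%N -> (forall j, (x <= j < E)%N -> (s j < r j)%N) ->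
  (* E' = e' + 1 = min {j >= x : r_j >= s_j} *)
  (x <= E')%N -> (s E' <= r E')%N -> (forall j, (x <= j < E')%N -> (r j < s j)%N) ->
  G <= (\sum_(1 <= i < rho.+1) (minn (r i) (s i))%:Z) + Num.max e e' ->
  (e' < e ->
     (forall i, (x <= i)%N -> i%:Z <= e ->
        - x%:Z - 1 <= (s i)%:Z - (r i)%:Z <= -1 /\
        ((s i)%:Z - (r i)%:Z = - x%:Z - 1 -> Dphi)) /\
     (forall i, e < i%:Z ->
        - x%:Z <= (s i)%:Z - (r i)%:Z <= e + 1 /\
        ((s i)%:Z - (r i)%:Z = e + 1 -> Dpsi))) /\
  (e < e' ->
     (forall i, (x <= i)%N -> i%:Z <= e' ->
        - x%:Z - 1 <= (r i)%:Z - (s i)%:Z <= -1 /\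
        ((r i)%:Z - (s i)%:Z = - x%:Z - 1 -> Dpsi)) /\
     (forall i, e' < i%:Z ->
        - x%:Z <= (r i)%:Z - (s i)%:Z <= e' + 1 /\
        ((r i)%:Z - (s i)%:Z = e' + 1 -> Dphi))).
Proof.
move=> rho1 rho2 rho r s r' s' e e' G Dphi Dpsi hA hB mA mB hg _ hr' rx _ xE _ hE xE' _ hE' HG.
have [pA nzA degA r_eq0] := pencil_conj_degree_bound hA mA.
have [pB nzB degB s_eq0] := pencil_conj_degree_bound hB mB.
have [rho1E rho2E] : rho1 = rho /\ rho2 = rho.
  by have := hr' 0%N; rewrite /rho /r' /s' /conjseq /=; lia.
rewrite -/rho1 rho1E in nzA degA r_eq0; rewrite -/rho2 rho2E in nzB degB s_eq0.
have x_gt0 : (0 < x)%N by case: (posnP x) rx => // ->; rewrite /r /s /conjseq /= rho1E rho2E.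
have HGA : (rho <= \sum_(1 <= i < rho.+1) minn (r i) (s i) + maxn E E'
    + \sum_(1 <= i < rho) tdeg (g i.+1) + \sum_(1 <= i < rho.+1) r' i)%N.
  by move: HG; rewrite /G /e /e' !sum_Posz; lia.
have HGB : (rho <= \sum_(1 <= i < rho.+1) minn (s i) (r i) + maxn E E'
    + \sum_(1 <= i < rho) tdeg (g i.+1) + \sum_(1 <= i < rho.+1) s' i)%N.
  by move: HGA; rewrite (eq_bigr _ (fun i _ => minnC (r i) (s i))) (eq_bigr _ (fun i _ => hr' i)).
have g_phi j : (2 <= j <= rho)%N -> mdvd (g j) (phi j) by case/hg.
have g_psi j : (2 <= j <= rho)%N -> mdvd (g j) (psi j) by case/hg => _ [].
have [exA DphiA] := excess_bound_gcd nzA g_phi g_psi HGA (degA _ _).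
have [exB DpsiB] := excess_bound_gcd nzB g_psi g_phi HGB (degB _ _).
split=> lt.
- have /maxn_idPl ME : (E' <= E)%N by move: lt; rewrite /e /e'; lia.
  rewrite ME in exA DphiA exB DpsiB.
  by move: (conj_diff_bounds (r_eq0 _) (s_eq0 _) x_gt0 rx xE hE exA exB DphiA DpsiB).
- have /maxn_idPr ME : (E <= E')%N by move: lt; rewrite /e /e'; lia.
  rewrite ME in exA DphiA exB DpsiB.
  by move: (conj_diff_bounds (s_eq0 _) (r_eq0 _) x_gt0 (nesym rx) xE' hE' exB exA DpsiB DphiA).
Qed.
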